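(* Let $q$ be a power of the prime $p$. For every integer $c\ge2$ and every integer $k\ge0$, $$R^c_k\le p\cdot\max_{0\le j\le k}\binom{k+c-2-j}{c-2}\binom{q/p-1}{\lfloor j/p\rfloor}.$$
   Context: Binomial coefficients $\binom{x}{m}=x(x-1)\cdots(x-m+1)/m!$ for real $x$, integer $m\ge0$. $R^1_k=-(-1)^{\lfloor k/p\rfloor}\binom{q/p-1}{\lfloor k/p\rfloor}$ for integers $k\ge0$, and recursively $R^c_k=\sum_{j=0}^kR^{c-1}_j$ for $c\ge2$. *)

From HB Require Import structures.
From mathcomp Require Import all_boot all_order all_algebra.
Set Implicit Arguments. Unset Strict Implicit. Unset Printing Implicit Defensive.
Import Order.TTheory GRing.Theory Num.Theory.
Local Open Scope ring_scope.

Definition binomr (x : rat) (m : nat) : rat :=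
  (\prod_(i < m) (x - i%:R)) / (m`!)%:R.

Definition R1 (p q : nat) (k : nat) : rat :=
  - ((-1) ^+ (k %/ p)%N * binomr (q%:R / p%:R - 1) (k %/ p)%N).

(* Rc p q c k = R^c_k for c >= 1 (value at c = 0 is a junk copy of R^1). *)
Fixpoint Rc (p q : nat) (c : nat) (k : nat) : rat :=
  match c with
  | 0 => R1 p q k
  | 1 => R1 p q k
  | (S (S _ as c')) => \sum_(j < k.+1) Rc p q c' j
  end.

From HB Require Import structures.
From mathcomp Require Import all_boot all_order all_algebra zify ring.
Import Order.TTheory GRing.Theory Num.Theory.
Set Implicit Arguments. Unset Strict Implicit. Unset Printing Implicit Defensive.

(* Write c = d + 2.  Unfolding the iterated partial sums gives the closed form
   R^c_k = sum_{j<=k} C(k+d-j, d) R^1_j, and for q = p^e the value q/p - 1 is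
   the natural number a = p^(e-1) - 1, so that
     R^c_k = - sum_{j<=k} (-1)^(j/p) w_j,   w_j = C(k+d-j, d) C(a, j/p).
   Splitting j = p m + i by its residue i < p turns this into p alternating
   sums  - sum_m (-1)^m v_i(m),  where v_i(m) = [p m + i <= k] C(k+d-i-p m, d)
   C(a, m).  Each v_i is a product of log-concave sequences whose zeros form a
   final segment, hence it is unimodal; and an alternating sum of a unimodal
   nonnegative sequence bounded by B is at least v_i(0) - B >= -B.  Taking
   B = max_{j<=k} w_j bounds each residue class by B, whence R^c_k <= p B. *)

Definition log_concave (f : nat -> nat) := forall m, f m * f m.+2 <= f m.+1 * f m.+1.
Definition zeros_persist (f : nat -> nat) := forall m, f m = 0 -> f m.+1 = 0.
Definition unimodal (f : nat -> nat) := forall m, f m.+1 <= f m -> f m.+2 <= f m.+1.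

Lemma log_concave_mul f g :
  log_concave f -> log_concave g -> log_concave (fun m => f m * g m).
Proof.
by move=> hf hg m; rewrite mulnACA [leqRHS]mulnACA leq_mul.
Qed.

Lemma zeros_persist_mul f g :
  zeros_persist f -> zeros_persist g -> zeros_persist (fun m => f m * g m).
Proof.
by move=> hf hg m /eqP; rewrite muln_eq0 => /orP[/eqP/hf-> | /eqP/hg->]; rewrite ?muln0.
Qed.

(* A log-concave sequence without internal zeros is unimodal: a descent
   f(m+1) <= f(m) propagates through f(m+1)^2 >= f(m) f(m+2). *)
Lemma log_concave_unimodal f : log_concave f -> zeros_persist f -> unimodal f.
Proof.
move=> lc_f zp_f m descent.
have [f1_0 | f1_gt0] := posnP (f m.+1); first by rewrite (zp_f _ f1_0) f1_0.
rewrite -(leq_pmul2l f1_gt0); apply: leq_trans (lc_f m).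
by rewrite leq_mul2r descent orbT.
Qed.

(* The row m |-> C(a, m) of Pascal's triangle, via m C(a,m) = (a-m+1) C(a,m-1). *)
Lemma log_concave_bin a : log_concave (fun m => 'C(a, m)).
Proof.
move=> m; rewrite -(@leq_pmul2l (m.+1 * m.+2)) //.
have -> : m.+1 * m.+2 * ('C(a, m) * 'C(a, m.+2))
        = (m.+1 * (a - m.+1)) * ('C(a, m) * 'C(a, m.+1)).
  by rewrite mulnACA (mul_bin_left a m.+1); ring.
have -> : m.+1 * m.+2 * ('C(a, m.+1) * 'C(a, m.+1))
        = (m.+2 * (a - m)) * ('C(a, m) * 'C(a, m.+1)).
  by rewrite mulnACA (mul_bin_left a m); ring.
by rewrite leq_mul2r leq_mul ?orbT // leq_sub2l.
Qed.

Lemma zeros_persist_bin a : zeros_persist (fun m => 'C(a, m)).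
Proof.
move=> m /= /eqP; rewrite -leqn0 leqNgt bin_gt0 -ltnNge => lt_a_m.
exact: bin_small (leqW lt_a_m).
Qed.

(* Binomials of a decreasing linear argument, m |-> C(X - p m, r), are
   log-concave: C(n, r) r! is the falling factorial, a product of r
   log-concave linear sequences. *)
Lemma log_concave_lin X p : log_concave (fun m => X - p * m).
Proof. move=> m; rewrite !mulnS; move: (p * m) => A; nia. Qed.

Lemma log_concave_ffact X p r : log_concave (fun m => (X - p * m) ^_ r).
Proof.
elim: r X => [|r IHr] X m; first by rewrite !ffactn0.
have := log_concave_mul (log_concave_lin X p) (IHr X.-1) m.
by rewrite !ffactnS -!subn1 !(subnAC _ 1).
Qed.

Lemma log_concave_bin_lin X p r : log_concave (fun m => 'C(X - p * m, r)).
Proof.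
move=> m; rewrite -(@leq_pmul2r (r`! * r`!)) ?muln_gt0 ?fact_gt0 //.
rewrite mulnACA [leqRHS]mulnACA !bin_ffact.
exact: log_concave_ffact.
Qed.

Lemma zeros_persist_bin_lin X p r : zeros_persist (fun m => 'C(X - p * m, r)).
Proof.
move=> m /= /eqP; rewrite -leqn0 leqNgt bin_gt0 -ltnNge => lt_X_r.
apply: bin_small; apply: leq_ltn_trans lt_X_r.
by rewrite leq_sub2l // leq_mul2l leqnSn orbT.
Qed.

Section DownClosedIndicator.
Variable P : pred nat.
Hypothesis P_down : forall m, P m.+1 -> P m.

Lemma log_concave_indicator : log_concave (fun m => nat_of_bool (P m)).
Proof.
move=> m; case P2: (P m.+2); last by rewrite muln0.
by rewrite (P_down P2); case: (P m).
Qed.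

Lemma zeros_persist_indicator : zeros_persist (fun m => nat_of_bool (P m)).
Proof. by move=> m /=; case: (P m) (P m.+1) (@P_down m) => [|] [|] // ->. Qed.

End DownClosedIndicator.

Lemma unimodal_nonincreasing v : unimodal v -> v 1 <= v 0 -> forall m, v m.+1 <= v m.
Proof. by move=> uv v10; elim=> // m; apply: uv. Qed.

Local Open Scope ring_scope.

Section AlternatingSums.
Variable R : numDomainType.

Definition altsum (v : nat -> nat) (L : nat) : R := \sum_(m < L) (-1) ^+ m * (v m)%:R.

Lemma altsum0 v : altsum v 0 = 0.
Proof. by rewrite /altsum big_ord0. Qed.

Lemma altsumS v L : altsum v L.+1 = (v 0%N)%:R - altsum (fun m => v m.+1) L.
Proof.
rewrite /altsum big_ord_recl expr0 mul1r -sumrN.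
by congr (_ + _); apply: eq_bigr => m _; rewrite exprS mulN1r mulNr.
Qed.

Lemma altsum_nonincreasing v L : (forall m, (v m.+1 <= v m)%N) ->
  0 <= altsum v L <= (v 0%N)%:R.
Proof.
elim: L v => [|L IHL] v dec_v; first by rewrite altsum0 lexx ler0n.
have /andP[alt_ge0 alt_le] := IHL _ (fun m => dec_v m.+1).
rewrite altsumS subr_ge0 gerBl alt_ge0 andbT.
by apply: le_trans alt_le _; rewrite ler_nat.
Qed.

(* For a unimodal v bounded by B, the alternating sum is at least v(0) - B:
   either v is nonincreasing from the start or from index 1 (previous
   lemma), or v(0) < v(1) < v(2) and induction applies to the tail v(m+2). *)
Lemma altsum_unimodal v (B : R) L : unimodal v -> (forall m, (v m)%:R <= B) ->
  (v 0%N)%:R - B <= altsum v L.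
Proof.
elim/ltn_ind: L v => L IHL v uv le_vB.
have B_ge0 : 0 <= B by apply: le_trans (le_vB 0%N); rewrite ler0n.
have [v10 | v01] := leqP (v 1%N) (v 0%N).
  have /andP[alt_ge0 _] := altsum_nonincreasing L (unimodal_nonincreasing uv v10).
  by apply: le_trans alt_ge0; rewrite subr_le0.
case: L IHL => [|[|L]] IHL.
- by rewrite altsum0 subr_le0.
- by rewrite altsumS altsum0 subr0 gerBl.
have [v21 | v12] := leqP (v 2%N) (v 1%N).
  have dec_v' := unimodal_nonincreasing (fun m => uv m.+1) v21.
  have /andP[_ alt_le] := altsum_nonincreasing L.+1 dec_v'.
  by rewrite altsumS lerD2l lerN2 (le_trans alt_le).
have IH := IHL L (leqW (ltnSn L)) _ (fun m => uv m.+2) (fun m => le_vB m.+2).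
rewrite altsumS altsumS opprB addrA -addrA lerD2l lerBrDr.
by apply: le_trans IH; rewrite addrC lerD2r ler_nat ltnW.
Qed.

End AlternatingSums.

Lemma sum_by_residue (V : nmodType) (F : nat -> V) p N : (0 < p)%N ->
  \sum_(j < N) F j =
  \sum_(i < p) \sum_(m < N) (if (p * m + i < N)%N then F (p * m + i)%N else 0).
Proof.
move=> p_gt0.
rewrite -(big_mkord xpredT F) (big_nat_widen _ _ _ _ _ (leq_pmulr N p_gt0)).
rewrite big_mkcond big_nat_mul /=.
rewrite big_mkord exchange_big /=; apply: eq_bigr => i _.
rewrite -[X in \sum_(X <= _ < _) _](add0n (i * p)%N) big_addn mulSn addnK big_mkord.
by apply: eq_bigr => j _; rewrite addnC mulnC.
Qed.

Lemma binomr_nat (n m : nat) : binomr n%:R m = ('C(n, m))%:R.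
Proof.
have ffactE : \prod_(i < m) (n%:R - i%:R) = (n ^_ m)%:R :> rat.
  elim: m => [|m IHm]; first by rewrite big_ord0 ffactn0.
  rewrite big_ord_recr /= IHm ffactnSr natrM.
  have [le_mn | lt_nm] := leqP m n; first by rewrite natrB.
  by rewrite ffact_small // !mul0r.
by rewrite /binomr ffactE -bin_ffact natrM mulfK // pnatr_eq0 -lt0n fact_gt0.
Qed.

Lemma prime_power_ratio (p e : nat) : (0 < p)%N -> (0 < e)%N ->
  (p ^ e)%N%:R / p%:R - 1 = ((p ^ e.-1)%N.-1)%:R :> rat.
Proof.
move=> p_gt0 e_gt0.
have pe_gt0 : (0 < p ^ e.-1)%N by rewrite expn_gt0 p_gt0.
rewrite -[in LHS](prednK e_gt0) expnS natrM mulrC mulKf ?pnatr_eq0 -?lt0n //.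
by rewrite -[in LHS](prednK pe_gt0) -addn1 natrD addrK.
Qed.

(* Closed form of the (d+2)-fold iterated partial sums of R^1, by Pascal's rule. *)
Lemma Rc_closed p q d k :
  Rc p q d.+2 k = \sum_(j < k.+1) ('C(k + d - j, d))%:R * R1 p q j.
Proof.
elim: d k => [|d IHd] k.
  by apply: eq_bigr => j _; rewrite bin0 mul1r.
have -> : Rc p q d.+3 k = \sum_(i < k.+1) Rc p q d.+2 i by [].
under eq_bigr do rewrite IHd.
elim: k => [|k IHk]; first by rewrite !big_ord1 /= !add0n !subn0 !binn.
rewrite big_ord_recr /= IHk [in RHS]big_ord_recr [X in _ + X = _]big_ord_recr /=.
rewrite addrA -big_split /= !addKn !binn; congr (_ + _).
apply: eq_bigr => j _.
have le_j : (j <= k + d.+1)%N by have := ltn_ord j; lia.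
have -> : (k.+1 + d.+1 - j = (k + d.+1 - j).+1)%N by rewrite addSn subSn.
by rewrite binS -mulrDl -natrD addSn -addnS.
Qed.

Lemma divn_residue p m i : (i < p)%N -> ((p * m + i) %/ p)%N = m.
Proof. by move=> lt_ip; rewrite mulnC divnMDl ?divn_small ?addn0 // (leq_ltn_trans _ lt_ip). Qed.

Section ResidueClasses.
Variables (R : numDomainType) (p a d k : nat).

(* w_j = C(k+d-j, d) C(a, j/p), the absolute value of the j-th term of R^{d+2}_k. *)
Definition weight (j : nat) : nat := 'C(k + d - j, d) * 'C(a, j %/ p).

Definition residue_weight (i m : nat) : nat :=
  (p * m + i < k.+1) * ('C(k + d - i - p * m, d) * 'C(a, m)).

Lemma residue_weightE i m : (i < p)%N -> (p * m + i < k.+1)%N ->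
  residue_weight i m = weight (p * m + i).
Proof.
move=> lt_ip in_range; rewrite /residue_weight /weight in_range mul1n.
by rewrite divn_residue // [(p * m + i)%N]addnC subnDA.
Qed.

(* Each v_i is unimodal, as a product of three log-concave factors. *)
Lemma residue_weight_unimodal i : unimodal (residue_weight i).
Proof.
pose in_range m := (p * m + i < k.+1)%N.
have down m : in_range m.+1 -> in_range m.
  by apply: leq_ltn_trans; rewrite leq_add2r leq_mul2l leqnSn orbT.
apply: log_concave_unimodal.
  apply: log_concave_mul (log_concave_indicator down) _.
  exact: log_concave_mul (@log_concave_bin_lin (k + d - i) p d) (@log_concave_bin a).
apply: zeros_persist_mul (zeros_persist_indicator down) _.
exact: zeros_persist_mul (@zeros_persist_bin_lin (k + d - i) p d) (@zeros_persist_bin a).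
Qed.

Lemma residue_class_bound i (B : R) : (i < p)%N ->
  (forall j, (j < k.+1)%N -> (weight j)%:R <= B) ->
  - \sum_(m < k.+1) (if (p * m + i < k.+1)%N
                     then (-1) ^+ ((p * m + i) %/ p) * (weight (p * m + i))%:R
                     else 0) <= B.
Proof.
move=> lt_ip le_wB.
have B_ge0 : 0 <= B by apply: le_trans (le_wB 0%N isT); rewrite ler0n.
have -> : \sum_(m < k.+1) (if (p * m + i < k.+1)%N
                          then (-1) ^+ ((p * m + i) %/ p) * (weight (p * m + i))%:R
                          else 0) = altsum R (residue_weight i) k.+1.
  apply: eq_bigr => m _; case: ifP => in_range; last first.
    by rewrite /residue_weight in_range mul0n mulr0.
  by rewrite residue_weightE // divn_residue.
have le_vB : forall m, (residue_weight i m)%:R <= B.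
  move=> m; have [in_range | out] := ltnP (p * m + i) k.+1.
    by rewrite residue_weightE // le_wB.
  by rewrite /residue_weight ltnNge out mul0n.
have alt_lb := altsum_unimodal k.+1 (residue_weight_unimodal (i := i)) le_vB.
rewrite lerNl; apply: le_trans alt_lb.
by rewrite lerDr ler0n.
Qed.

End ResidueClasses.

Theorem lemma4p4 (p q e c k : nat) (hp : prime p) (he : (0 < e)%N) (hq : q = (p ^ e)%N)
  (hc : (2 <= c)%N) :
  let T := fun j : nat =>
    ('C(k + c - 2 - j, c - 2))%:R * binomr (q%:R / p%:R - 1) (j %/ p)%N in
  Rc p q c k <= p%:R * \big[Num.max/T 0%N]_(j < k.+1) T (nat_of_ord j).
Proof.
pose T j := ('C(k + c - 2 - j, c - 2))%:R * binomr (q%:R / p%:R - 1) (j %/ p)%N.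
change (Rc p q c k <= p%:R * \big[Num.max/T 0%N]_(j < k.+1) T j).
have p_gt0 := prime_gt0 hp.
have [d c_eq] : exists d, c = d.+2 by exists (c - 2)%N; lia.
set a := (p ^ e.-1).-1.
have ratio : q%:R / p%:R - 1 = a%:R :> rat by rewrite hq prime_power_ratio.
have T_weight j : T j = (weight p a d k j)%:R.
  by rewrite /T ratio binomr_nat natrM c_eq; congr ('C(_, _)%:R * _); lia.
set M := \big[Num.max/T 0%N]_(j < k.+1) T j.
have le_TM j : (j < k.+1)%N -> T j <= M.
  by move=> lt_jk; exact: (le_bigmax (T 0%N) (fun j : 'I_k.+1 => T j) (Ordinal lt_jk)).
have -> : Rc p q c k = - \sum_(j < k.+1) (-1) ^+ (j %/ p) * (weight p a d k j)%:R.
  rewrite c_eq Rc_closed -sumrN; apply: eq_bigr => j _.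
  by rewrite /R1 ratio binomr_nat /weight natrM mulrN mulrCA mulrA.
rewrite (sum_by_residue (fun j => (-1) ^+ (j %/ p) * (weight p a d k j)%:R) k.+1 p_gt0).
have -> : p%:R * M = \sum_(i < p) M by rewrite sumr_const card_ord mulr_natl.
rewrite -sumrN.
apply: ler_sum => i _; apply: residue_class_bound => // j /le_TM.
by rewrite T_weight.
Qed.
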